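(* Fix $a\ge0$, $b>0$ and $N\ge2$. Then for all $M$ large enough, $$P_o(\xi_t\ne\mathbf 0\ \forall t>0)\le\begin{cases}M^{-1/3}\big(1/2+bN(1-a/4)^{-1}\big)&\text{if }a<4,\\ M^{-1/3}\big(1/2+(b/2)(N+2)^2\big)&\text{if }a=4,\\ M^{-1/3}\big(1/2+b(a/4-1)^{-2}(a/4)^{N+2}\big)&\text{if }a>4.\end{cases}$$
   Context: For $x,y\in\mathbb Z$ write $y\sim x$ iff $0<|x-y|\le M$. The $N$-patch model (patch size $N\ge2$, inner birth rate $a$, outer birth rate $b$, dispersal range $M$) is the continuous-time Markov process $\xi_t\in\{0,1,\dots,N\}^{\mathbb Z}$ with transitions: $\xi(x)\to\xi(x)-1$ at rate $\xi(x)$, and $\xi(x)\to\xi(x)+1$ at rate $$\frac{a}{N(N-1)}\xi(x)(\xi(x)-1)(N-\xi(x))+\sum_{y\sim x}\frac{b}{2M\,N(N-1)}\xi(y)(\xi(y)-1)(N-\xi(x)).$$ $\mathbf 0$ is the all-empty configuration, and $P_o$ is the law of the process started from $\xi_0(0)=N$, $\xi_0(x)=0$ for $x\neq0$. *)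

From Stdlib Require Import Reals ZArith List.
Import ListNotations.
Open Scope R_scope.

(* Configurations of the N-patch model: xi : Z -> nat (values in {0..N}). *)
Definition config := Z -> nat.

(* The all-empty configuration is represented implicitly by [is_zero]. *)

Definition rsum {A : Type} (f : A -> R) (l : list A) : R :=
  fold_right Rplus 0 (map f l).

Definition window (W : nat) : list Z :=
  map (fun i => (Z.of_nat i - Z.of_nat W)%Z) (seq 0 (2 * W + 1)).

Definition upd (xi : config) (x : Z) (d : nat) : config :=
  fun y => if Z.eq_dec y x then d else xi y.

(* birth rate at site x:
   a/(N(N-1)) xi(x)(xi(x)-1)(N-xi(x))
   + sum_{y ~ x} b/(2M N(N-1)) xi(y)(xi(y)-1)(N-xi(x)),
   where y ~ x iff 0 < |x-y| <= M. *)
Definition birth_rate (a b : R) (N M : nat) (xi : config) (x : Z) : R :=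
  a / (INR N * (INR N - 1))
    * INR (xi x * (xi x - 1) * (N - xi x))%nat
  + rsum (fun k : nat =>
        b / (2 * INR M * INR N * (INR N - 1))
          * (INR (xi (x + Z.of_nat k)%Z * (xi (x + Z.of_nat k)%Z - 1) * (N - xi x))%nat
             + INR (xi (x - Z.of_nat k)%Z * (xi (x - Z.of_nat k)%Z - 1) * (N - xi x))%nat))
      (seq 1 M).

Definition death_rate (xi : config) (x : Z) : R := INR (xi x).

(* xi vanishes on the window [-L, L] (used with the invariant that the
   support of xi lies in [-L, L]) *)
Definition is_zero (L : nat) (xi : config) : bool :=
  forallb (fun x => Nat.eqb (xi x) 0) (window L).

(* hit_prob a b N M n L xi = probability that the embedded jump chain of the
   N-patch model started from xi (support in [-L,L]) hits the all-empty
   configuration 0 within n jumps.  0 is absorbing. *)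
Fixpoint hit_prob (a b : R) (N M : nat) (n : nat) (L : nat) (xi : config) : R :=
  if is_zero L xi then 1 else
  match n with
  | O => 0
  | S n' =>
      let W := (L + M)%nat in
      let q := rsum (fun x => death_rate xi x + birth_rate a b N M xi x) (window W) in
      rsum (fun x =>
              death_rate xi x / q * hit_prob a b N M n' W (upd xi x (xi x - 1)%nat)
            + birth_rate a b N M xi x / q * hit_prob a b N M n' W (upd xi x (S (xi x))))
        (window W)
  end.

Definition xi_o (N : nat) : config :=
  fun x => if Z.eq_dec x 0 then N else 0%nat.

(* extinction probability under P_o is the supremum over n of hit_prob ... n;
   survival probability P_o(xi_t <> 0 for all t > 0) = 1 - that supremum. *)
Definition extinction_within (a b : R) (N M : nat) : R -> Prop :=
  fun r => exists n : nat, r = hit_prob a b N M n 0 (xi_o N).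

(* In a sparse configuration (at most N individuals at the origin, at most one at every
   other site, all within distance M) only the origin reproduces, so the chain can leave the
   sparse set only when a migrant from the origin lands on an occupied site, at a rate
   O(1/M) relative to the total jump rate. Solving a first-order recursion in the population
   j of the origin gives a potential phi(j, m) = O(1/M), m the number of other occupied
   sites, that is superharmonic once this failure rate is accounted for, and a potential
   V(j, m) that drops by at least 1 per jump in mean. Induction on the number n of jumps
   gives P(hit 0 within n jumps) >= 1 - phi - min(1, V/n) from every sparse configuration,
   so the survival probability from xi_o is at most phi(N, 0) = K/M, which is below
   M^(-1/3)/2 once M is large. *)

From Stdlib Require Import Reals ZArith List Lra Lia.
Import ListNotations.
Open Scope R_scope.

Section Rsum.
Context {A : Type}.
Implicit Types (f g : A -> R) (l : list A).

Lemma rsum_nil f : rsum f [] = 0.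
Proof. reflexivity. Qed.

Lemma rsum_cons f x l : rsum f (x :: l) = f x + rsum f l.
Proof. reflexivity. Qed.

Lemma rsum_app f l1 l2 : rsum f (l1 ++ l2) = rsum f l1 + rsum f l2.
Proof. induction l1 as [|x l1 IH]; cbn [app]; rewrite ?rsum_cons, ?IH, ?rsum_nil; lra. Qed.

Lemma rsum_ext f g l : (forall x, In x l -> f x = g x) -> rsum f l = rsum g l.
Proof.
  induction l as [|x l IH]; intros H; [reflexivity|].
  rewrite !rsum_cons, H by (left; auto).
  rewrite IH; [reflexivity|]. intros; apply H; right; auto.
Qed.

Lemma rsum_le f g l : (forall x, In x l -> f x <= g x) -> rsum f l <= rsum g l.
Proof.
  induction l as [|x l IH]; intros H; [rewrite !rsum_nil; lra|].
  rewrite !rsum_cons.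
  apply Rplus_le_compat; [apply H; left; auto|apply IH; intros; apply H; right; auto].
Qed.

Lemma rsum_plus f g l : rsum (fun x => f x + g x) l = rsum f l + rsum g l.
Proof. induction l as [|x l IH]; [rewrite !rsum_nil; lra|]. rewrite !rsum_cons, IH; lra. Qed.

Lemma rsum_scal c f l : rsum (fun x => c * f x) l = c * rsum f l.
Proof. induction l as [|x l IH]; [rewrite !rsum_nil; lra|]. rewrite !rsum_cons, IH; lra. Qed.

Lemma rsum_div f q l : rsum (fun x => f x / q) l = rsum f l / q.
Proof.
  unfold Rdiv. rewrite (rsum_ext _ (fun x => / q * f x)) by (intros; lra).
  rewrite rsum_scal; lra.
Qed.

Lemma rsum_eq0 f l : (forall x, In x l -> f x = 0) -> rsum f l = 0.
Proof.
  intros H. rewrite (rsum_ext f (fun _ => 0)) by auto.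
  clear H; induction l as [|x l IH]; [reflexivity|]. rewrite rsum_cons, IH; lra.
Qed.

Lemma rsum_ge0 f l : (forall x, In x l -> 0 <= f x) -> 0 <= rsum f l.
Proof. intros H. rewrite <- (rsum_eq0 (fun _ => 0) l) by auto. apply rsum_le; auto. Qed.

Lemma rsum_ge_term f l x : (forall y, In y l -> 0 <= f y) -> In x l -> f x <= rsum f l.
Proof.
  induction l as [|y l IH]; intros H Hx; [destruct Hx|]. rewrite rsum_cons.
  assert (0 <= f y) by (apply H; left; auto).
  assert (0 <= rsum f l) by (apply rsum_ge0; intros; apply H; right; auto).
  destruct Hx as [<-|Hx]; [lra|].
  assert (f x <= rsum f l) by (apply IH; auto; intros; apply H; right; auto). lra.
Qed.

Lemma rsum_Rmin f g l : rsum (fun x => Rmin (f x) (g x)) l <= Rmin (rsum f l) (rsum g l).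
Proof. apply Rmin_glb; apply rsum_le; intros; [apply Rmin_l|apply Rmin_r]. Qed.

Lemma rsum_const_1 l : rsum (fun _ => 1) l = INR (length l).
Proof. induction l as [|x l IH]; [reflexivity|]. rewrite rsum_cons, IH. cbn [length]. rewrite S_INR. lra. Qed.

Lemma rsum_update f g l x : NoDup l -> In x l ->
  (forall y, In y l -> y <> x -> g y = f y) -> rsum g l = rsum f l - f x + g x.
Proof.
  induction l as [|y l IH]; intros ND Hx H; [destruct Hx|].
  inversion ND as [|? ? Hy ND']; subst. rewrite !rsum_cons.
  destruct Hx as [<-|Hx].
  - rewrite (rsum_ext g f); [lra|].
    intros z Hz; apply H; [right; auto|]. intros ->; contradiction.
  - assert (g y = f y) by (apply H; [left; auto|]; intros ->; contradiction).
    rewrite (IH ND' Hx) by (intros; apply H; auto; right; auto). lra.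
Qed.

End Rsum.

Lemma window_S W : window (S W) = (- Z.of_nat (S W))%Z :: window W ++ [Z.of_nat (S W)].
Proof.
  unfold window. replace (2 * S W + 1)%nat with (S (S (2 * W + 1))) by lia.
  rewrite <- cons_seq, seq_S, <- seq_shift. cbn [map]. rewrite map_app, map_map. cbn [map].
  f_equal; f_equal.
  - apply map_ext; intros. rewrite !Nat2Z.inj_succ. lia.
  - f_equal. rewrite !Nat2Z.inj_succ, Nat2Z.inj_add. lia.
Qed.

Lemma In_window W x : In x (window W) <-> (- Z.of_nat W <= x <= Z.of_nat W)%Z.
Proof.
  unfold window. rewrite in_map_iff. split.
  - intros [i [<- Hi]]. apply in_seq in Hi. lia.
  - intros H. exists (Z.to_nat (x + Z.of_nat W)). split; [lia|]. apply in_seq; lia.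
Qed.

Lemma NoDup_window W : NoDup (window W).
Proof.
  apply NoDup_map_NoDup_ForallPairs; [|apply seq_NoDup]. intros i j _ _ H; lia.
Qed.

Lemma length_window W : length (window W) = (2 * W + 1)%nat.
Proof. unfold window. rewrite length_map, length_seq. reflexivity. Qed.

Lemma rsum_window_shrink (f : Z -> R) M W : (M <= W)%nat ->
  (forall x, (Z.abs x > Z.of_nat M)%Z -> f x = 0) -> rsum f (window W) = rsum f (window M).
Proof.
  intros HW H. induction HW as [|W HW IH]; [reflexivity|].
  rewrite window_S, rsum_cons, rsum_app, rsum_cons, rsum_nil, !H by lia. lra.
Qed.

Lemma Rdiv_ge0 x y : 0 <= x -> 0 <= y -> 0 <= x / y.
Proof.
  intros Hx Hy. destruct (Req_dec y 0) as [->|H].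
  - unfold Rdiv. rewrite Rinv_0. lra.
  - unfold Rdiv. apply Rmult_le_pos; auto. apply Rlt_le, Rinv_0_lt_compat. lra.
Qed.

Section Ladder.
Variables (N : nat) (r g : nat -> R).

(* [ladder_rec k] is the weight at level [N - k]: the recursion runs down from level [N]. *)
Fixpoint ladder_rec (k : nat) : R :=
  match k with
  | O => g N / INR N
  | S k' => (g (N - S k')%nat + r (N - S k')%nat * ladder_rec k') / INR (N - S k')
  end.

Definition ladder_w (j : nat) : R := ladder_rec (N - j).

Fixpoint ladder_sum (j : nat) : R :=
  match j with
  | O => 0
  | S j' => ladder_sum j' + (if (2 <=? S j')%nat then ladder_w (S j') else 0)
  end.

Lemma ladder_w_eq j : r N = 0 -> (1 <= j <= N)%nat ->
  INR j * ladder_w j - r j * ladder_w (S j) = g j.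
Proof.
  intros HrN Hj. unfold ladder_w. destruct (Nat.eq_dec j N) as [->|Hne].
  - rewrite HrN, Nat.sub_diag. simpl. field. apply not_0_INR; lia.
  - replace (N - j)%nat with (S (N - S j)) by lia. simpl.
    replace (N - S (N - S j))%nat with j by lia. field. apply not_0_INR; lia.
Qed.

Hypotheses (Hr : forall j, 0 <= r j) (Hg : forall j, 0 <= g j).

Lemma ladder_w_ge0 j : 0 <= ladder_w j.
Proof.
  unfold ladder_w. induction (N - j)%nat as [|k IH]; simpl.
  - apply Rdiv_ge0; [apply Hg|apply pos_INR].
  - apply Rdiv_ge0; [|apply pos_INR].
    pose proof (Hr (N - S k)%nat). pose proof (Hg (N - S k)%nat). nra.
Qed.

Lemma ladder_sum_ge0 j : 0 <= ladder_sum j.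
Proof.
  induction j as [|j IH]; cbn [ladder_sum]; [lra|].
  pose proof (ladder_w_ge0 (S j)). destruct (2 <=? S j)%nat; lra.
Qed.

End Ladder.

Lemma ladder_sum_pred N r g j : (2 <= j)%nat ->
  ladder_sum N r g j = ladder_sum N r g (j - 1) + ladder_w N r g j.
Proof.
  intros H. destruct j as [|j]; [lia|]. cbn [ladder_sum]. replace (S j - 1)%nat with j by lia.
  destruct (Nat.leb_spec 2 (S j)); [reflexivity|lia].
Qed.

(* Drift of the two potentials at [j] individuals at the origin and [m] other occupied
   sites; the four terms are a death and a birth at the origin, a death at an occupied site
   and a birth on an empty site. Births on occupied sites leave the sparse set and count
   as the failure rate [C (N - 1)] per occupied site. *)
Lemma phi_drift_algebra (j r m C M N U vj vm1 vp1 wj wp1 pm1 : R) :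
  1 <= N -> 0 <= j -> 0 <= r -> 0 <= m -> 0 <= C -> 0 < M -> 0 <= U -> 0 <= vj ->
  vj = vm1 + wj -> vp1 = vj + wp1 -> j * wj - r * wp1 = 2 * M * C * N * U ->
  C * (N - 1) * M <= U -> pm1 <= (m * U + vm1) / M ->
  j * pm1 + r * ((m * U + vp1) / M) + m * (((m - 1) * U + vj) / M + C * (N - 1))
  + (2 * M - m) * (C * N * (((m + 1) * U + vj) / M))
  <= (j + r + m + C * (2 * M * N - m)) * ((m * U + vj) / M).
Proof.
  intros HN Hj Hr Hm HC HM HU Hvj Evj Evp1 Ew HCU Hpm1.
  assert (j * pm1 <= j * ((m * U + vm1) / M)) by (apply Rmult_le_compat_l; auto).
  enough (E : ((j + r + m + C * (2 * M * N - m)) * ((m * U + vj) / M)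
     - (j * ((m * U + vm1) / M) + r * ((m * U + vp1) / M)
        + m * (((m - 1) * U + vj) / M + C * (N - 1))
        + (2 * M - m) * (C * N * (((m + 1) * U + vj) / M)))) * M
     = (j * wj - r * wp1 - 2 * M * C * N * U)
       + m * (U - C * (N - 1) * M) + m * C * N * U + C * m * (N - 1) * (m * U + vj)).
  { rewrite Ew, Rminus_diag, Rplus_0_l in E.
    assert (0 <= m * (U - C * (N - 1) * M)) by (apply Rmult_le_pos; lra).
    assert (0 <= m * C * N * U) by (repeat apply Rmult_le_pos; lra).
    assert (0 <= C * m * (N - 1) * (m * U + vj)) by (repeat apply Rmult_le_pos; nra).
    assert (0 <= (j + r + m + C * (2 * M * N - m)) * ((m * U + vj) / M)
     - (j * ((m * U + vm1) / M) + r * ((m * U + vp1) / M)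
        + m * (((m - 1) * U + vj) / M + C * (N - 1))
        + (2 * M - m) * (C * N * (((m + 1) * U + vj) / M)))).
    { apply (Rmult_le_reg_r M); [lra|]. lra. }
    lra. }
  subst vj vp1. field. lra.
Qed.

Lemma V_drift_algebra (j r m C M N bj bm1 bp1 gj gp1 Vm1 : R) :
  1 <= N -> 0 <= j -> 0 <= r -> 0 <= m -> 0 <= C -> 0 < M -> 1 <= bj ->
  bj = bm1 + gj -> bp1 = bj + gp1 -> j * gj - r * gp1 = j + r + 3 * (2 * M * C * N) ->
  Vm1 <= 2 * m + bm1 ->
  j * Vm1 + r * (2 * m + bp1) + m * (2 * (m - 1) + bj) + (2 * M - m) * (C * N * (2 * (m + 1) + bj))
  <= (j + r + m + C * (2 * M * N - m)) * (2 * m + bj - 1).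
Proof.
  intros HN Hj Hr Hm HC HM Hbj Ebj Ebp1 Eg HVm1.
  assert (j * Vm1 <= j * (2 * m + bm1)) by (apply Rmult_le_compat_l; auto).
  assert (0 <= C * N * m) by (repeat apply Rmult_le_pos; lra).
  assert (0 <= C * (N - 1) * m * (2 * m + bj - 1)) by (repeat apply Rmult_le_pos; lra).
  enough (E : (j + r + m + C * (2 * M * N - m)) * (2 * m + bj - 1)
    - (j * (2 * m + bm1) + r * (2 * m + bp1) + m * (2 * (m - 1) + bj)
       + (2 * M - m) * (C * N * (2 * (m + 1) + bj)))
    = (j * gj - r * gp1 - (j + r + 3 * (2 * M * C * N)))
      + m + 3 * C * N * m + C * (N - 1) * m * (2 * m + bj - 1)).
  { rewrite Eg, Rminus_diag in E. lra. }
  subst bj bp1. ring.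
Qed.

Lemma forallb_false_exists {A} (f : A -> bool) l :
  forallb f l = false -> exists x, In x l /\ f x = false.
Proof.
  induction l as [|y l IH]; simpl; [discriminate|]. destruct (f y) eqn:E; simpl.
  - intros H; destruct (IH H) as [x [Hx Hf]]; exists x; auto.
  - intros _; exists y; auto.
Qed.

Lemma upd_same xi x k : upd xi x k x = k.
Proof. unfold upd. destruct (Z.eq_dec x x); congruence. Qed.

Lemma upd_other xi x k y : y <> x -> upd xi x k y = xi y.
Proof. unfold upd. destruct (Z.eq_dec y x); congruence. Qed.

(* Markov's bound on the probability that a time of mean at most [v] exceeds [n]. *)
Definition markov_tail (n : nat) (v : R) : R := Rmin 1 (v / INR n).

Lemma markov_tail_ge0 n v : 0 <= v -> 0 <= markov_tail n v.
Proof. intros Hv. apply Rmin_glb; [lra|]. apply Rdiv_ge0; [exact Hv|apply pos_INR]. Qed.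

Lemma markov_tail_comb2 d e k1 k2 V1 V2 n : 0 <= d -> 0 <= e -> (1 <= n)%nat ->
  k1 <= markov_tail n V1 -> k2 <= markov_tail n V2 ->
  d * k1 + e * k2 <= Rmin (d + e) ((d * V1 + e * V2) / INR n).
Proof.
  intros Hd He Hn H1 H2. unfold markov_tail in *.
  pose proof (Rmin_l 1 (V1 / INR n)); pose proof (Rmin_l 1 (V2 / INR n)).
  pose proof (Rmin_r 1 (V1 / INR n)); pose proof (Rmin_r 1 (V2 / INR n)).
  apply Rmin_glb.
  - assert (d * k1 <= d * 1) by (apply Rmult_le_compat_l; lra).
    assert (e * k2 <= e * 1) by (apply Rmult_le_compat_l; lra). lra.
  - assert (d * k1 <= d * (V1 / INR n)) by (apply Rmult_le_compat_l; lra).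
    assert (e * k2 <= e * (V2 / INR n)) by (apply Rmult_le_compat_l; lra).
    unfold Rdiv in *. lra.
Qed.

Lemma markov_tail_comb1 d V n : 0 <= d -> (1 <= n)%nat ->
  d * markov_tail n V <= Rmin d (d * V / INR n).
Proof.
  intros Hd Hn. replace (d * markov_tail n V) with (d * markov_tail n V + 0 * 0) by ring.
  eapply Rle_trans; [apply (markov_tail_comb2 d 0 _ 0 V 0 n); try lra; try lia|].
  - apply markov_tail_ge0; lra.
  - replace (d + 0) with d by ring. replace (d * V + 0 * 0) with (d * V) by ring. lra.
Qed.

(* One jump that lowers the mean of the remaining time by one turns the bound for [n]
   jumps into the bound for [n + 1] jumps. *)
Lemma markov_tail_step Q SV V n : 0 < Q -> (1 <= n)%nat -> SV <= Q * (V - 1) ->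
  Rmin Q (SV / INR n) <= Q * markov_tail (S n) V.
Proof.
  intros HQ Hn HS. unfold markov_tail. rewrite S_INR.
  assert (Hn0 : 1 <= INR n) by (apply (le_INR 1); lia).
  destruct (Rle_dec (INR n + 1) V).
  - rewrite (Rmin_left 1 (V / (INR n + 1))).
    { eapply Rle_trans; [apply Rmin_l|]. lra. }
    apply Rmult_le_reg_r with (INR n + 1); [lra|]. unfold Rdiv.
    rewrite Rmult_assoc, Rinv_l by lra. lra.
  - rewrite (Rmin_right 1 (V / (INR n + 1))).
    2:{ apply Rmult_le_reg_r with (INR n + 1); [lra|]. unfold Rdiv.
        rewrite Rmult_assoc, Rinv_l by lra. lra. }
    eapply Rle_trans; [apply Rmin_r|].
    apply Rmult_le_reg_r with (INR n * (INR n + 1)); [nra|].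
    replace (SV / INR n * (INR n * (INR n + 1))) with (SV * (INR n + 1)) by (field; lra).
    replace (Q * (V / (INR n + 1)) * (INR n * (INR n + 1))) with (Q * V * INR n) by (field; lra).
    assert (SV * (INR n + 1) <= Q * (V - 1) * (INR n + 1)) by (apply Rmult_le_compat_r; lra).
    nra.
Qed.

Lemma is_zero_false_witness L xi :
  is_zero L xi = false -> exists x, In x (window L) /\ (1 <= xi x)%nat.
Proof.
  intros Hz. destruct (forallb_false_exists _ _ Hz) as [x [Hx Hf]].
  apply Nat.eqb_neq in Hf. exists x; split; [exact Hx|lia].
Qed.

Lemma Rle_of_le_plus_div_succ x y c : (forall n, x <= y + c / INR (S n)) -> x <= y.
Proof.
  intros H. destruct (Rle_dec x y) as [|Hgt]; [assumption|exfalso].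
  assert (Hd : 0 < (x - y) / (Rabs c + 1)) by (apply Rdiv_lt_0_compat; pose proof (Rabs_pos c); lra).
  destruct (archimed_cor1 _ Hd) as [k [Hk Hk0]].
  specialize (H (Nat.pred k)). rewrite Nat.succ_pred_pos in H by exact Hk0.
  assert (Hk1 : 0 < INR k) by (apply lt_0_INR; exact Hk0).
  assert (c / INR k <= Rabs c * / INR k)
    by (unfold Rdiv; apply Rmult_le_compat_r; [apply Rlt_le, Rinv_0_lt_compat, Hk1|apply Rle_abs]).
  assert (Rabs c * / INR k <= Rabs c * ((x - y) / (Rabs c + 1)))
    by (apply Rmult_le_compat_l; [apply Rabs_pos|lra]).
  assert (Rabs c * ((x - y) / (Rabs c + 1)) < x - y).
  { pose proof (Rabs_pos c). apply (Rmult_lt_reg_r (Rabs c + 1)); [lra|].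
    unfold Rdiv. rewrite Rmult_assoc, (Rmult_assoc (x - y)), Rinv_l by lra. nra. }
  lra.
Qed.

Section SparseChain.
Variables (a b : R) (N M : nat).
Hypotheses (Ha : 0 <= a) (Hb : 0 < b) (HN : (2 <= N)%nat) (HM : (1 <= M)%nat).

Lemma INR_N_ge2 : 2 <= INR N.
Proof. apply (le_INR 2); exact HN. Qed.

Lemma INR_M_ge1 : 1 <= INR M.
Proof. apply (le_INR 1); exact HM. Qed.

(* Only the origin can give birth in a sparse configuration. *)
Definition sparse (xi : config) : Prop :=
  (xi 0%Z <= N)%nat /\ (forall x, x <> 0%Z -> (xi x <= 1)%nat) /\
  (forall x, (Z.abs x > Z.of_nat M)%Z -> xi x = 0%nat).

Definition inner_rate (j : nat) : R :=
  a / (INR N * (INR N - 1)) * INR (j * (j - 1) * (N - j)).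

Definition disp_rate (j : nat) : R :=
  b / (2 * INR M * INR N * (INR N - 1)) * INR (j * (j - 1)).

Lemma inner_rate_ge0 j : 0 <= inner_rate j.
Proof.
  pose proof INR_N_ge2. unfold inner_rate.
  apply Rmult_le_pos; [apply Rdiv_ge0; nra|apply pos_INR].
Qed.

Lemma inner_rate_full : inner_rate N = 0.
Proof. unfold inner_rate. rewrite Nat.sub_diag, Nat.mul_0_r. simpl. lra. Qed.

Lemma pair_count_le1 j : (j <= 1)%nat -> (j * (j - 1) = 0)%nat.
Proof. intros H. destruct j as [|[|]]; lia. Qed.

Lemma inner_rate_le1 j : (j <= 1)%nat -> inner_rate j = 0.
Proof. intros H. unfold inner_rate. rewrite pair_count_le1 by exact H. simpl. lra. Qed.

Lemma disp_rate_le1 j : (j <= 1)%nat -> disp_rate j = 0.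
Proof. intros H. unfold disp_rate. rewrite pair_count_le1 by exact H. simpl. lra. Qed.

Lemma pair_count_le j : (j <= N)%nat -> INR (j * (j - 1)) <= INR N * (INR N - 1).
Proof.
  intros H. assert (INR (j * (j - 1)) <= INR (N * (N - 1))) by (apply le_INR, Nat.mul_le_mono; lia).
  rewrite (mult_INR N), (minus_INR N 1) in H0 by lia. simpl in H0. lra.
Qed.

Lemma disp_rate_ge0 j : 0 <= disp_rate j.
Proof.
  pose proof INR_N_ge2; pose proof INR_M_ge1. unfold disp_rate.
  apply Rmult_le_pos; [apply Rdiv_ge0; [lra|]|apply pos_INR].
  assert (0 <= 2 * INR M * INR N) by nra. nra.
Qed.

Lemma disp_rate_total j : 2 * INR M * disp_rate j * INR N = b * INR (j * (j - 1)) / (INR N - 1).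
Proof.
  pose proof INR_N_ge2; pose proof INR_M_ge1. unfold disp_rate. field. repeat split; lra.
Qed.

Lemma disp_rate_le j : (j <= N)%nat -> disp_rate j * (INR N - 1) * INR M <= b * INR N.
Proof.
  intros Hj. pose proof INR_N_ge2; pose proof INR_M_ge1; pose proof (pair_count_le j Hj).
  replace (disp_rate j * (INR N - 1) * INR M) with (b * INR (j * (j - 1)) / (2 * INR N))
    by (unfold disp_rate; field; repeat split; lra).
  apply Rmult_le_reg_r with (2 * INR N); [lra|]. unfold Rdiv.
  rewrite Rmult_assoc, Rinv_l by lra. nra.
Qed.

Lemma sparse_pair_count_off xi y : sparse xi -> y <> 0%Z -> (xi y * (xi y - 1) = 0)%nat.
Proof. intros [_ [H _]] Hy. apply pair_count_le1, H, Hy. Qed.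

Lemma birth_rate_origin xi : sparse xi -> birth_rate a b N M xi 0%Z = inner_rate (xi 0%Z).
Proof.
  intros G. unfold birth_rate, inner_rate.
  rewrite (rsum_eq0 _ (seq 1 M)); [lra|]. intros k Hk. apply in_seq in Hk.
  rewrite !(sparse_pair_count_off xi _ G) by lia. simpl. lra.
Qed.

Lemma birth_rate_off xi x : sparse xi -> x <> 0%Z ->
  birth_rate a b N M xi x =
  if (Z.abs_nat x <=? M)%nat then disp_rate (xi 0%Z) * INR (N - xi x) else 0.
Proof.
  intros G Hx. unfold birth_rate.
  rewrite (sparse_pair_count_off xi x G Hx). simpl (INR (0 * _)). rewrite Rmult_0_r, Rplus_0_l.
  set (k0 := Z.abs_nat x).
  assert (T : forall k, In k (seq 1 M) -> k <> k0 ->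
     b / (2 * INR M * INR N * (INR N - 1)) *
       (INR (xi (x + Z.of_nat k)%Z * (xi (x + Z.of_nat k)%Z - 1) * (N - xi x)) +
        INR (xi (x - Z.of_nat k)%Z * (xi (x - Z.of_nat k)%Z - 1) * (N - xi x))) = 0).
  { intros k Hk Hne. apply in_seq in Hk. unfold k0 in Hne.
    rewrite !(sparse_pair_count_off xi _ G) by lia. simpl. lra. }
  destruct (Nat.leb_spec k0 M) as [Hle|Hgt].
  - assert (Hin : In k0 (seq 1 M)) by (apply in_seq; unfold k0; lia).
    rewrite (rsum_update (fun _ => 0) _ _ k0 (seq_NoDup _ _) Hin) by (intros; apply T; auto).
    rewrite rsum_eq0 by auto. unfold disp_rate.
    destruct (Z_lt_le_dec x 0).
    + replace (x + Z.of_nat k0)%Z with 0%Z by (unfold k0; lia).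
      rewrite (sparse_pair_count_off xi (x - Z.of_nat k0) G) by (unfold k0; lia).
      rewrite !mult_INR. simpl. lra.
    + replace (x - Z.of_nat k0)%Z with 0%Z by (unfold k0; lia).
      rewrite (sparse_pair_count_off xi (x + Z.of_nat k0) G) by (unfold k0; lia).
      rewrite !mult_INR. simpl. lra.
  - apply rsum_eq0. intros k Hk. apply T; auto. apply in_seq in Hk. lia.
Qed.

Lemma birth_rate_ge0 xi x : 0 <= birth_rate a b N M xi x.
Proof.
  pose proof INR_N_ge2. unfold birth_rate.
  apply Rplus_le_le_0_compat.
  - apply Rmult_le_pos; [apply Rdiv_ge0; nra|apply pos_INR].
  - apply rsum_ge0. intros k _. apply Rmult_le_pos.
    + apply Rdiv_ge0; [lra|]. pose proof (pos_INR M). assert (0 <= 2 * INR M * INR N) by nra. nra.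
    + apply Rplus_le_le_0_compat; apply pos_INR.
Qed.

Lemma hit_prob_ge0 n L xi : 0 <= hit_prob a b N M n L xi.
Proof.
  revert L xi. induction n as [|n IH]; intros L xi; simpl; destruct (is_zero L xi); try lra.
  apply rsum_ge0. intros x _.
  set (q := rsum _ _).
  assert (0 <= q).
  { apply rsum_ge0. intros y _. pose proof (pos_INR (xi y)). pose proof (birth_rate_ge0 xi y).
    unfold death_rate; lra. }
  pose proof (pos_INR (xi x)). pose proof (birth_rate_ge0 xi x).
  apply Rplus_le_le_0_compat; apply Rmult_le_pos; try apply Rdiv_ge0; auto.
Qed.

Definition phi_source (j : nat) : R := b * INR N * b * INR (j * (j - 1)) / (INR N - 1).

Definition V_source (j : nat) : R :=
  INR j + inner_rate j + 3 * b * INR (j * (j - 1)) / (INR N - 1).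

(* For a sparse configuration with [j] individuals at the origin and [m] other occupied
   sites, [phi_pot j m] bounds the probability of ever leaving the sparse set and
   [V_pot j m] the expected number of jumps to extinction. *)
Definition phi_pot (j : nat) (m : R) : R :=
  if (2 <=? j)%nat then (m * (b * INR N) + ladder_sum N inner_rate phi_source j) / INR M
  else 0.

Definition V_pot (j : nat) (m : R) : R :=
  if (2 <=? j)%nat then 2 * m + (1 + ladder_sum N inner_rate V_source j) else m + INR j.

Lemma phi_source_ge0 j : 0 <= phi_source j.
Proof.
  pose proof INR_N_ge2. unfold phi_source.
  apply Rdiv_ge0; [|lra]. repeat apply Rmult_le_pos; try apply pos_INR; lra.
Qed.

Lemma V_source_ge0 j : 0 <= V_source j.
Proof.
  pose proof INR_N_ge2. pose proof (pos_INR (j * (j - 1))). pose proof (pos_INR j).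
  pose proof (inner_rate_ge0 j). unfold V_source.
  assert (0 <= 3 * b * INR (j * (j - 1)) / (INR N - 1)) by (apply Rdiv_ge0; nra). lra.
Qed.

Lemma phi_pot_ge0 j m : 0 <= m -> 0 <= phi_pot j m.
Proof.
  intros Hm. pose proof INR_N_ge2. unfold phi_pot. destruct (2 <=? j)%nat; [|lra].
  pose proof (ladder_sum_ge0 N inner_rate phi_source inner_rate_ge0 phi_source_ge0 j).
  apply Rdiv_ge0; [|apply pos_INR]. assert (0 <= b * INR N) by nra. nra.
Qed.

Lemma V_pot_ge j m : 0 <= m ->
  m + INR j <= V_pot j m \/ (2 <= j)%nat /\ 2 * m + 1 <= V_pot j m.
Proof.
  intros Hm. unfold V_pot. destruct (Nat.leb_spec 2 j); [right|left; lra].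
  pose proof (ladder_sum_ge0 N inner_rate V_source inner_rate_ge0 V_source_ge0 j). split; [lia|lra].
Qed.

Lemma V_pot_ge0 j m : 0 <= m -> 0 <= V_pot j m.
Proof. intros Hm. pose proof (pos_INR j). destruct (V_pot_ge j m Hm) as [|[]]; lra. Qed.

Lemma phi_pot_drift j m : (j <= N)%nat -> 0 <= m ->
  let C := disp_rate j in let r := inner_rate j in
  INR j * phi_pot (j - 1) m + r * phi_pot (S j) m
  + m * (phi_pot j (m - 1) + C * (INR N - 1))
  + (2 * INR M - m) * (C * INR N * phi_pot j (m + 1))
  <= (INR j + r + m + C * (2 * INR M * INR N - m)) * phi_pot j m.
Proof.
  intros Hj Hm C r.
  pose proof INR_N_ge2; pose proof INR_M_ge1; pose proof (disp_rate_ge0 j).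
  destruct (Nat.leb_spec 2 j) as [Hj2|Hj2].
  - unfold phi_pot at 2 3 4 5.
    rewrite !(proj2 (Nat.leb_le 2 j)), (proj2 (Nat.leb_le 2 (S j))) by lia.
    apply (phi_drift_algebra (INR j) r m C (INR M) (INR N) (b * INR N)
       (ladder_sum N inner_rate phi_source j) (ladder_sum N inner_rate phi_source (j - 1))
       (ladder_sum N inner_rate phi_source (S j)) (ladder_w N inner_rate phi_source j)
       (ladder_w N inner_rate phi_source (S j))); try lra.
    + apply pos_INR.
    + apply inner_rate_ge0.
    + apply disp_rate_ge0.
    + nra.
    + apply ladder_sum_ge0; [apply inner_rate_ge0|apply phi_source_ge0].
    + apply ladder_sum_pred; lia.
    + rewrite (ladder_sum_pred _ _ _ (S j)) by lia. replace (S j - 1)%nat with j by lia. lra.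
    + unfold r. rewrite ladder_w_eq by (apply inner_rate_full || lia).
      unfold C. rewrite disp_rate_total. unfold phi_source, Rdiv. ring.
    + apply disp_rate_le, Hj.
    + unfold phi_pot. destruct (Nat.leb_spec 2 (j - 1)); [lra|].
      replace (j - 1)%nat with 1%nat by lia. cbn [ladder_sum]. simpl (2 <=? 1)%nat.
      apply Rdiv_ge0; [|lra]. assert (0 <= b * INR N) by nra. nra.
  - unfold C, r. rewrite disp_rate_le1, inner_rate_le1 by lia.
    unfold phi_pot. rewrite (proj2 (Nat.leb_gt 2 j)), (proj2 (Nat.leb_gt 2 (j - 1))) by lia. lra.
Qed.

Lemma V_pot_drift j m : (j <= N)%nat -> 0 <= m ->
  let C := disp_rate j in let r := inner_rate j in
  INR j * V_pot (j - 1) m + r * V_pot (S j) m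
  + m * V_pot j (m - 1)
  + (2 * INR M - m) * (C * INR N * V_pot j (m + 1))
  <= (INR j + r + m + C * (2 * INR M * INR N - m)) * (V_pot j m - 1).
Proof.
  intros Hj Hm C r.
  pose proof INR_N_ge2; pose proof INR_M_ge1; pose proof (disp_rate_ge0 j).
  destruct (Nat.leb_spec 2 j) as [Hj2|Hj2].
  - unfold V_pot at 2 3 4 5.
    rewrite !(proj2 (Nat.leb_le 2 j)), (proj2 (Nat.leb_le 2 (S j))) by lia.
    apply (V_drift_algebra (INR j) r m C (INR M) (INR N)
       (1 + ladder_sum N inner_rate V_source j) (1 + ladder_sum N inner_rate V_source (j - 1))
       (1 + ladder_sum N inner_rate V_source (S j)) (ladder_w N inner_rate V_source j)
       (ladder_w N inner_rate V_source (S j))); try lra.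
    + apply pos_INR.
    + apply inner_rate_ge0.
    + apply disp_rate_ge0.
    + pose proof (ladder_sum_ge0 N inner_rate V_source inner_rate_ge0 V_source_ge0 j). lra.
    + rewrite (ladder_sum_pred _ _ _ j) by lia. lra.
    + rewrite (ladder_sum_pred _ _ _ (S j)) by lia. replace (S j - 1)%nat with j by lia. lra.
    + unfold r. rewrite ladder_w_eq by (apply inner_rate_full || lia).
      unfold C. rewrite disp_rate_total. unfold V_source. fold r. unfold Rdiv. ring.
    + unfold V_pot. destruct (Nat.leb_spec 2 (j - 1)); [lra|].
      replace (j - 1)%nat with 1%nat by lia. simpl. lra.
  - unfold C, r. rewrite disp_rate_le1, inner_rate_le1 by lia.
    unfold V_pot. rewrite (proj2 (Nat.leb_gt 2 j)), (proj2 (Nat.leb_gt 2 (j - 1))) by lia.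
    destruct j as [|[|]]; [simpl; nra|simpl; nra|lia].
Qed.

Definition off_mass (xi : config) : R :=
  rsum (fun x => if Z.eq_dec x 0 then 0 else INR (xi x)) (window M).

Definition phi_cfg (xi : config) : R := phi_pot (xi 0%Z) (off_mass xi).

Definition V_cfg (xi : config) : R := V_pot (xi 0%Z) (off_mass xi).

Lemma off_mass_ge0 xi : 0 <= off_mass xi.
Proof. apply rsum_ge0. intros x _. destruct (Z.eq_dec x 0); [lra|apply pos_INR]. Qed.

Lemma off_mass_upd_origin xi k : off_mass (upd xi 0 k) = off_mass xi.
Proof.
  apply rsum_ext. intros x _. destruct (Z.eq_dec x 0); [reflexivity|]. rewrite upd_other; auto.
Qed.

Lemma off_mass_upd_off xi x k : x <> 0%Z -> (Z.abs_nat x <= M)%nat ->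
  off_mass (upd xi x k) = off_mass xi - INR (xi x) + INR k.
Proof.
  intros Hx Hin. unfold off_mass.
  rewrite (rsum_update (fun x => if Z.eq_dec x 0 then 0 else INR (xi x)) _ _ x (NoDup_window M)).
  - destruct (Z.eq_dec x 0); [contradiction|]. rewrite upd_same. lra.
  - apply In_window; lia.
  - intros y _ Hy. destruct (Z.eq_dec y 0); [reflexivity|]. rewrite upd_other; auto.
Qed.

Lemma sparse_upd_origin xi k : sparse xi -> (k <= N)%nat -> sparse (upd xi 0 k).
Proof.
  intros [G1 [G2 G3]] Hk. split; [|split].
  - rewrite upd_same; auto.
  - intros x Hx. rewrite upd_other; auto.
  - intros x Hx. rewrite upd_other by lia. auto.
Qed.

Lemma sparse_upd_off xi x k : sparse xi -> x <> 0%Z -> (k <= 1)%nat -> (Z.abs_nat x <= M)%nat ->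
  sparse (upd xi x k).
Proof.
  intros [G1 [G2 G3]] Hx Hk Hin. split; [|split].
  - rewrite upd_other; auto.
  - intros y Hy. destruct (Z.eq_dec y x) as [->|Hne]; [rewrite upd_same; auto|rewrite upd_other; auto].
  - intros y Hy. rewrite upd_other by lia. auto.
Qed.

Lemma rsum_site_form W xi (A al be : R) : (M <= W)%nat ->
  rsum (fun x => if Z.eq_dec x 0 then A
                 else if (Z.abs_nat x <=? M)%nat then al * INR (xi x) + be * (1 - INR (xi x))
                 else 0) (window W)
  = A + al * off_mass xi + be * (2 * INR M - off_mass xi).
Proof.
  intros HW. rewrite rsum_window_shrink with (M := M); auto.
  2:{ intros x Hx. destruct (Z.eq_dec x 0); [lia|].
      destruct (Nat.leb_spec (Z.abs_nat x) M); [lia|reflexivity]. }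
  set (h := fun x => if Z.eq_dec x 0 then 0 else al * INR (xi x) + be * (1 - INR (xi x))).
  rewrite (rsum_update h _ _ 0%Z (NoDup_window M)).
  2:{ apply In_window; lia. }
  2:{ intros y Hy Hne. unfold h. destruct (Z.eq_dec y 0); [contradiction|].
      apply In_window in Hy. destruct (Nat.leb_spec (Z.abs_nat y) M); [reflexivity|lia]. }
  unfold h. destruct (Z.eq_dec 0 0) as [_|]; [|congruence].
  assert (E1 : rsum (fun x => if Z.eq_dec x 0 then 0 else 1) (window M) = 2 * INR M).
  { rewrite (rsum_update (fun _ => 1) _ _ 0%Z (NoDup_window M)).
    - rewrite rsum_const_1, length_window. destruct (Z.eq_dec 0 0); [|congruence].
      rewrite plus_INR, mult_INR. simpl. lra.
    - apply In_window; lia.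
    - intros y _ Hne. destruct (Z.eq_dec y 0); [contradiction|reflexivity]. }
  rewrite (rsum_ext _ (fun x => al * (if Z.eq_dec x 0 then 0 else INR (xi x)) +
      (be * (if Z.eq_dec x 0 then 0 else 1) + (- be) * (if Z.eq_dec x 0 then 0 else INR (xi x))))).
  2:{ intros x _. destruct (Z.eq_dec x 0); lra. }
  rewrite !rsum_plus, !rsum_scal, E1. fold (off_mass xi). lra.
Qed.

(* Jump rate at [x] and the rate-weighted potentials after a jump at [x]; a birth on an
   occupied site, which leaves the sparse set, is charged potential 1 in [site_phi_flux]. *)
Definition site_rate (xi : config) (x : Z) : R :=
  let j := xi 0%Z in let C := disp_rate j in
  if Z.eq_dec x 0 then INR j + inner_rate j
  else if (Z.abs_nat x <=? M)%nat
  then (1 + C * (INR N - 1)) * INR (xi x) + (C * INR N) * (1 - INR (xi x))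
  else 0.

Definition site_phi_flux (xi : config) (x : Z) : R :=
  let j := xi 0%Z in let m := off_mass xi in let C := disp_rate j in
  if Z.eq_dec x 0 then INR j * phi_pot (j - 1) m + inner_rate j * phi_pot (S j) m
  else if (Z.abs_nat x <=? M)%nat
  then (phi_pot j (m - 1) + C * (INR N - 1)) * INR (xi x)
       + (C * INR N * phi_pot j (m + 1)) * (1 - INR (xi x))
  else 0.

Definition site_V_flux (xi : config) (x : Z) : R :=
  let j := xi 0%Z in let m := off_mass xi in let C := disp_rate j in
  if Z.eq_dec x 0 then INR j * V_pot (j - 1) m + inner_rate j * V_pot (S j) m
  else if (Z.abs_nat x <=? M)%nat
  then V_pot j (m - 1) * INR (xi x) + (C * INR N * V_pot j (m + 1)) * (1 - INR (xi x))
  else 0.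

Lemma site_rate_eq xi x : sparse xi ->
  death_rate xi x + birth_rate a b N M xi x = site_rate xi x.
Proof.
  intros G. unfold site_rate, death_rate. destruct (Z.eq_dec x 0) as [->|Hx].
  - rewrite birth_rate_origin by auto. reflexivity.
  - rewrite birth_rate_off by auto. destruct G as [_ [G2 G3]].
    destruct (Nat.leb_spec (Z.abs_nat x) M).
    + specialize (G2 x Hx). destruct (xi x) as [|[|]]; [| |lia]; rewrite ?Nat.sub_0_r.
      * simpl INR. lra.
      * rewrite minus_INR by lia. simpl INR. lra.
    + rewrite G3 by lia. simpl. lra.
Qed.

Lemma rsum_site_rate W xi : (M <= W)%nat -> rsum (site_rate xi) (window W)
  = INR (xi 0%Z) + inner_rate (xi 0%Z) + off_mass xi
    + disp_rate (xi 0%Z) * (2 * INR M * INR N - off_mass xi).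
Proof. intros HW. unfold site_rate. rewrite rsum_site_form by exact HW. ring. Qed.

Lemma rsum_site_phi_flux W xi : sparse xi -> (M <= W)%nat ->
  rsum (site_phi_flux xi) (window W) <= rsum (site_rate xi) (window W) * phi_cfg xi.
Proof.
  intros [Gj _] HW. pose proof (phi_pot_drift (xi 0%Z) (off_mass xi) Gj (off_mass_ge0 xi)).
  unfold site_phi_flux. rewrite rsum_site_form, rsum_site_rate by exact HW.
  unfold phi_cfg. lra.
Qed.

Lemma rsum_site_V_flux W xi : sparse xi -> (M <= W)%nat ->
  rsum (site_V_flux xi) (window W) <= rsum (site_rate xi) (window W) * (V_cfg xi - 1).
Proof.
  intros [Gj _] HW. pose proof (V_pot_drift (xi 0%Z) (off_mass xi) Gj (off_mass_ge0 xi)).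
  unfold site_V_flux. rewrite rsum_site_form, rsum_site_rate by exact HW.
  unfold V_cfg. lra.
Qed.

Definition hit_lower (n : nat) (xi : config) : R :=
  1 - phi_cfg xi - markov_tail n (V_cfg xi).

Lemma hit_lower_le1 n xi : hit_lower n xi <= 1.
Proof.
  unfold hit_lower, phi_cfg, V_cfg. pose proof (phi_pot_ge0 (xi 0%Z) _ (off_mass_ge0 xi)).
  pose proof (markov_tail_ge0 n _ (V_pot_ge0 (xi 0%Z) _ (off_mass_ge0 xi))). lra.
Qed.

Lemma V_cfg_ge1 L xi : sparse xi -> is_zero L xi = false -> 1 <= V_cfg xi.
Proof.
  intros [_ [_ G3]] Hz. destruct (is_zero_false_witness L xi Hz) as [x [_ Hx]].
  pose proof (off_mass_ge0 xi). pose proof (pos_INR (xi 0%Z)). unfold V_cfg.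
  assert (Hpos : 1 <= INR (xi 0%Z) \/ 1 <= off_mass xi).
  { destruct (Z.eq_dec x 0) as [->|Hne]; [left; apply (le_INR 1); exact Hx|right].
    assert (Hin : (Z.abs x <= Z.of_nat M)%Z).
    { destruct (Z_le_gt_dec (Z.abs x) (Z.of_nat M)); auto. rewrite G3 in Hx; lia. }
    eapply Rle_trans; [apply (le_INR 1); exact Hx|].
    pose proof (rsum_ge_term (fun x => if Z.eq_dec x 0 then 0 else INR (xi x)) (window M) x) as T.
    cbv beta in T. destruct (Z.eq_dec x 0); [contradiction|]. apply T.
    - intros y _. destruct (Z.eq_dec y 0); [lra|apply pos_INR].
    - apply In_window; lia. }
  destruct (V_pot_ge (xi 0%Z) (off_mass xi)) as [|[]]; auto; lra.
Qed.

Lemma total_rate_pos L xi : is_zero L xi = false ->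
  0 < rsum (fun x => death_rate xi x + birth_rate a b N M xi x) (window (L + M)).
Proof.
  intros Hz. destruct (is_zero_false_witness L xi Hz) as [x [Hx Hx1]].
  assert (1 <= death_rate xi x) by (apply (le_INR 1); exact Hx1).
  enough (death_rate xi x + birth_rate a b N M xi x
          <= rsum (fun x => death_rate xi x + birth_rate a b N M xi x) (window (L + M)))
    by (pose proof (birth_rate_ge0 xi x); lra).
  apply (rsum_ge_term (fun x => death_rate xi x + birth_rate a b N M xi x)).
  - intros y _. pose proof (pos_INR (xi y)). pose proof (birth_rate_ge0 xi y).
    unfold death_rate; lra.
  - apply In_window. apply In_window in Hx. lia.
Qed.

Lemma hit_prob_succ n L xi : hit_prob a b N M (S n) L xi =
  if is_zero L xi then 1 else
  rsum (fun x => (death_rate xi x * hit_prob a b N M n (L + M) (upd xi x (xi x - 1)%nat)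
                  + birth_rate a b N M xi x * hit_prob a b N M n (L + M) (upd xi x (S (xi x))))
                 / rsum (fun x => death_rate xi x + birth_rate a b N M xi x) (window (L + M)))
    (window (L + M)).
Proof.
  cbn [hit_prob]. destruct (is_zero L xi); [reflexivity|].
  apply rsum_ext. intros x _. unfold Rdiv. ring.
Qed.

Section Step.
Variables (n L : nat).
Hypotheses (Hn : (1 <= n)%nat)
  (IH : forall xi, sparse xi -> hit_lower n xi <= hit_prob a b N M n (L + M) xi).

Let hit := hit_prob a b N M n (L + M).

Lemma hit_upd_origin xi k : sparse xi -> (k <= N)%nat ->
  1 - phi_pot k (off_mass xi) - markov_tail n (V_pot k (off_mass xi)) <= hit (upd xi 0 k).
Proof.
  intros G Hk. pose proof (IH _ (sparse_upd_origin xi k G Hk)) as H.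
  unfold hit_lower, phi_cfg, V_cfg in H. rewrite upd_same, off_mass_upd_origin in H. exact H.
Qed.

Lemma hit_upd_off xi x l : sparse xi -> x <> 0%Z -> (Z.abs_nat x <= M)%nat -> (l <= 1)%nat ->
  let m := off_mass xi - INR (xi x) + INR l in
  1 - phi_pot (xi 0%Z) m - markov_tail n (V_pot (xi 0%Z) m) <= hit (upd xi x l).
Proof.
  intros G Hx Hin Hl m. pose proof (IH _ (sparse_upd_off xi x l G Hx Hl Hin)) as H.
  unfold hit_lower, phi_cfg, V_cfg in H. rewrite upd_other, off_mass_upd_off in H by auto.
  exact H.
Qed.

Lemma site_step_origin xi : sparse xi ->
  let j := xi 0%Z in let m := off_mass xi in
  INR j + inner_rate j - (INR j * phi_pot (j - 1) m + inner_rate j * phi_pot (S j) m)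
  - Rmin (INR j + inner_rate j) ((INR j * V_pot (j - 1) m + inner_rate j * V_pot (S j) m) / INR n)
  <= INR j * hit (upd xi 0 (j - 1)) + inner_rate j * hit (upd xi 0 (S j)).
Proof.
  intros G j m. pose proof G as [Gj _]. fold j in Gj.
  assert (Hdown : INR j * (1 - phi_pot (j - 1) m - markov_tail n (V_pot (j - 1) m))
                  <= INR j * hit (upd xi 0 (j - 1)))
    by (apply Rmult_le_compat_l; [apply pos_INR|apply hit_upd_origin; auto; lia]).
  assert (Hup : inner_rate j * (1 - phi_pot (S j) m - markov_tail n (V_pot (S j) m))
                <= inner_rate j * hit (upd xi 0 (S j))).
  { destruct (Nat.eq_dec j N) as [->|Hne]; [rewrite inner_rate_full; lra|].
    apply Rmult_le_compat_l; [apply inner_rate_ge0|apply hit_upd_origin; auto; lia]. }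
  pose proof (markov_tail_comb2 (INR j) (inner_rate j) _ _ (V_pot (j - 1) m) (V_pot (S j) m) n
                (pos_INR j) (inner_rate_ge0 j) Hn (Rle_refl _) (Rle_refl _)).
  lra.
Qed.

Lemma site_step_empty xi x : sparse xi -> x <> 0%Z -> (Z.abs_nat x <= M)%nat -> xi x = 0%nat ->
  let j := xi 0%Z in let m := off_mass xi in let e := disp_rate j * INR N in
  e - e * phi_pot j (m + 1) - Rmin e (e * V_pot j (m + 1) / INR n) <= e * hit (upd xi x 1).
Proof.
  intros G Hx Hin Ex j m e.
  pose proof (hit_upd_off xi x 1 G Hx Hin (le_n 1)) as Hlow. cbv zeta in Hlow.
  rewrite Ex in Hlow. simpl INR in Hlow. replace (off_mass xi - 0 + 1) with (m + 1) in Hlow by (unfold m; ring). fold j in Hlow.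
  assert (He : 0 <= e) by (pose proof INR_N_ge2; pose proof (disp_rate_ge0 j); unfold e; nra).
  pose proof (markov_tail_comb1 e (V_pot j (m + 1)) n He Hn).
  assert (e * (1 - phi_pot j (m + 1) - markov_tail n (V_pot j (m + 1)))
          <= e * hit (upd xi x 1)) by (apply Rmult_le_compat_l; lra).
  lra.
Qed.

(* A migrant landing on an occupied site leaves the sparse set; that hit is only bounded by 0. *)
Lemma site_step_occupied xi x : sparse xi -> x <> 0%Z -> (Z.abs_nat x <= M)%nat -> xi x = 1%nat ->
  let j := xi 0%Z in let m := off_mass xi in let f := disp_rate j * (INR N - 1) in
  1 + f - (phi_pot j (m - 1) + f) - Rmin (1 + f) (V_pot j (m - 1) / INR n)
  <= hit (upd xi x 0) + f * hit (upd xi x 2).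
Proof.
  intros G Hx Hin Ex j m f.
  pose proof (hit_upd_off xi x 0 G Hx Hin (le_0_n 1)) as Hlow. cbv zeta in Hlow.
  rewrite Ex in Hlow. simpl INR in Hlow. replace (off_mass xi - 1 + 0) with (m - 1) in Hlow by (unfold m; ring). fold j in Hlow.
  assert (Hf : 0 <= f) by (pose proof INR_N_ge2; pose proof (disp_rate_ge0 j); unfold f; nra).
  assert (0 <= f * hit (upd xi x 2)) by (apply Rmult_le_pos; [exact Hf|apply hit_prob_ge0]).
  assert (Rmin 1 (V_pot j (m - 1) / INR n) <= Rmin (1 + f) (V_pot j (m - 1) / INR n)).
  { apply Rmin_glb; [pose proof (Rmin_l 1 (V_pot j (m - 1) / INR n))|apply Rmin_r]; lra. }
  unfold markov_tail in Hlow. lra.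
Qed.

Lemma site_step_bound xi x : sparse xi ->
  site_rate xi x - site_phi_flux xi x - Rmin (site_rate xi x) (site_V_flux xi x / INR n)
  <= death_rate xi x * hit (upd xi x (xi x - 1))
     + birth_rate a b N M xi x * hit (upd xi x (S (xi x))).
Proof.
  intros G. unfold site_rate, site_phi_flux, site_V_flux, death_rate. cbv zeta.
  destruct (Z.eq_dec x 0) as [->|Hx].
  - rewrite birth_rate_origin by exact G. apply site_step_origin, G.
  - rewrite birth_rate_off by auto.
    set (j := xi 0%Z). set (m := off_mass xi). set (C := disp_rate j).
    destruct (Nat.leb_spec (Z.abs_nat x) M) as [Hin|Hout].
    + pose proof G as [_ [G2 _]]. specialize (G2 x Hx).
      destruct (xi x) as [|[|]] eqn:Ex; [| |lia].
      * pose proof (site_step_empty xi x G Hx Hin Ex) as H. cbv zeta in H. fold j m C in H.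
        rewrite Nat.sub_0_r. simpl INR.
        replace ((1 + C * (INR N - 1)) * 0 + C * INR N * (1 - 0)) with (C * INR N) by ring.
        replace ((V_pot j (m - 1) * 0 + C * INR N * V_pot j (m + 1) * (1 - 0)) / INR n)
          with (C * INR N * V_pot j (m + 1) / INR n) by (unfold Rdiv; ring).
        lra.
      * pose proof (site_step_occupied xi x G Hx Hin Ex) as H. cbv zeta in H. fold j m C in H.
        rewrite minus_INR by lia. simpl INR. replace (1 - 1)%nat with 0%nat by lia.
        replace ((1 + C * (INR N - 1)) * 1 + C * INR N * (1 - 1)) with (1 + C * (INR N - 1))
          by ring.
        replace ((V_pot j (m - 1) * 1 + C * INR N * V_pot j (m + 1) * (1 - 1)) / INR n)
          with (V_pot j (m - 1) / INR n) by (unfold Rdiv; ring).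
        lra.
    + pose proof G as [_ [_ G3]]. rewrite G3 by lia. simpl INR.
      replace (Rmin 0 (0 / INR n)) with 0
        by (unfold Rdiv; rewrite Rmult_0_l; symmetry; apply Rmin_left; lra).
      pose proof (hit_prob_ge0 n (L + M) (upd xi x (0 - 1))). fold hit in H. lra.
Qed.

Lemma hit_prob_succ_lower xi : sparse xi -> hit_lower (S n) xi <= hit_prob a b N M (S n) L xi.
Proof.
  intros G. rewrite hit_prob_succ. destruct (is_zero L xi) eqn:Hz; [apply hit_lower_le1|].
  set (W := (L + M)%nat). fold W in IH.
  set (q := rsum (fun x => death_rate xi x + birth_rate a b N M xi x) (window W)).
  assert (Hq : q = rsum (site_rate xi) (window W))
    by (apply rsum_ext; intros x _; apply site_rate_eq, G).
  assert (Hqpos : 0 < q) by apply (total_rate_pos L xi Hz).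
  rewrite rsum_div. fold q.
  assert (Hsum : q - rsum (site_phi_flux xi) (window W)
                   - Rmin q (rsum (site_V_flux xi) (window W) / INR n)
                 <= rsum (fun x => death_rate xi x * hit (upd xi x (xi x - 1)%nat)
                     + birth_rate a b N M xi x * hit (upd xi x (S (xi x)))) (window W)).
  { eapply Rle_trans; [|apply rsum_le; intros x _; apply site_step_bound, G].
    rewrite (rsum_ext (fun x => site_rate xi x - site_phi_flux xi x
               - Rmin (site_rate xi x) (site_V_flux xi x / INR n))
               (fun x => site_rate xi x + (-1) * site_phi_flux xi x
               + (-1) * Rmin (site_rate xi x) (site_V_flux xi x / INR n))) by (intros; ring).
    rewrite !rsum_plus, !rsum_scal, <- Hq.
    pose proof (rsum_Rmin (site_rate xi) (fun x => site_V_flux xi x / INR n) (window W)) as H.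
    rewrite rsum_div, <- Hq in H. lra. }
  pose proof (rsum_site_phi_flux W xi G (Nat.le_add_l M L)) as Hphi.
  pose proof (rsum_site_V_flux W xi G (Nat.le_add_l M L)) as HV.
  rewrite <- Hq in Hphi, HV.
  pose proof (markov_tail_step q _ (V_cfg xi) n Hqpos Hn HV) as Htail.
  apply Rmult_le_reg_r with q; [exact Hqpos|].
  unfold Rdiv. rewrite Rmult_assoc, Rinv_l, Rmult_1_r by lra.
  unfold hit in Hsum. fold W in Hsum. unfold hit_lower. nra.
Qed.

End Step.

Lemma hit_prob_one_lower L xi : sparse xi -> hit_lower 1 xi <= hit_prob a b N M 1 L xi.
Proof.
  intros G. destruct (is_zero L xi) eqn:Hz.
  - cbn [hit_prob]. rewrite Hz. apply hit_lower_le1.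
  - pose proof (hit_prob_ge0 1 L xi). pose proof (V_cfg_ge1 L xi G Hz).
    pose proof (phi_pot_ge0 (xi 0%Z) _ (off_mass_ge0 xi)).
    unfold hit_lower, markov_tail, phi_cfg. rewrite Rmin_left; [lra|]. simpl INR.
    unfold Rdiv. rewrite Rinv_1. lra.
Qed.

Lemma hit_prob_lower n L xi : (1 <= n)%nat -> sparse xi ->
  hit_lower n xi <= hit_prob a b N M n L xi.
Proof.
  intros Hn. revert L xi. induction Hn as [|n Hn IH]; intros L xi G.
  - apply hit_prob_one_lower, G.
  - apply hit_prob_succ_lower; auto.
Qed.

Lemma sparse_xi_o : sparse (xi_o N).
Proof.
  unfold xi_o. split; [|split].
  - destruct (Z.eq_dec 0 0); [lia|congruence].
  - intros x Hx. destruct (Z.eq_dec x 0); [contradiction|lia].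
  - intros x Hx. destruct (Z.eq_dec x 0); [lia|reflexivity].
Qed.

Lemma phi_cfg_xi_o : phi_cfg (xi_o N) = ladder_sum N inner_rate phi_source N / INR M.
Proof.
  unfold phi_cfg, phi_pot.
  replace (off_mass (xi_o N)) with 0.
  2:{ symmetry. apply rsum_eq0. intros x _. unfold xi_o.
      destruct (Z.eq_dec x 0); [reflexivity|]. simpl; lra. }
  replace (xi_o N 0%Z) with N by (unfold xi_o; destruct (Z.eq_dec 0 0); congruence).
  rewrite (proj2 (Nat.leb_le 2 N) HN). unfold Rdiv. ring.
Qed.

Lemma survival_le_phi ext : is_lub (extinction_within a b N M) ext ->
  1 - ext <= ladder_sum N inner_rate phi_source N / INR M.
Proof.
  intros [Hub _]. rewrite <- phi_cfg_xi_o.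
  apply (Rle_of_le_plus_div_succ _ _ (V_cfg (xi_o N))). intros n.
  assert (Hn : hit_prob a b N M (S n) 0 (xi_o N) <= ext) by (apply Hub; exists (S n); reflexivity).
  pose proof (hit_prob_lower (S n) 0 (xi_o N) (le_n_S _ _ (le_0_n n)) sparse_xi_o) as H.
  unfold hit_lower, markov_tail in H. pose proof (Rmin_r 1 (V_cfg (xi_o N) / INR (S n))). lra.
Qed.

End SparseChain.

Lemma Rpower_third_cube x : 0 < x -> Rpower x (1 / 3) ^ 3 = x.
Proof.
  intros Hx. rewrite <- Rpower_pow by (unfold Rpower; apply exp_pos).
  rewrite Rpower_mult. replace (1 / 3 * INR 3) with 1 by (simpl; field). apply Rpower_1, Hx.
Qed.

Lemma eventually_div_le_half_inv_cube_root K : 0 <= K ->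
  exists M0 : nat, forall M : nat, (M0 <= M)%nat ->
    (1 <= M)%nat /\ K / INR M <= Rpower (INR M) (- (1 / 3)) * (1 / 2).
Proof.
  intros HK. destruct (INR_unbounded (Rmax 1 ((2 * K) ^ 3))) as [M0 HM0].
  exists M0. intros M HM.
  assert (HMr : Rmax 1 ((2 * K) ^ 3) < INR M) by (pose proof (le_INR _ _ HM); lra).
  pose proof (Rmax_l 1 ((2 * K) ^ 3)); pose proof (Rmax_r 1 ((2 * K) ^ 3)).
  split; [apply (INR_lt 0); simpl; lra|].
  rewrite Rpower_Ropp. set (y := Rpower (INR M) (1 / 3)).
  assert (Hy0 : 0 < y) by (unfold y, Rpower; apply exp_pos).
  assert (Hy3 : y ^ 3 = INR M) by (apply Rpower_third_cube; lra).
  rewrite <- Hy3 in HMr |- *.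
  assert (Hy1 : 1 <= y).
  { destruct (Rle_dec 1 y); auto. assert (y ^ 3 < 1) by (simpl; nra). lra. }
  assert (Hy2K : 2 * K <= y).
  { destruct (Rle_dec (2 * K) y); auto. assert (y ^ 3 < (2 * K) ^ 3); [|lra].
    assert (y * y < (2 * K) * (2 * K)) by nra. simpl. nra. }
  apply (Rmult_le_reg_r (2 * y ^ 3)); [simpl; nra|].
  replace (K / y ^ 3 * (2 * y ^ 3)) with (2 * K) by (field; lra).
  replace (/ y * (1 / 2) * (2 * y ^ 3)) with (y ^ 2) by (field; lra). simpl. nra.
Qed.

Theorem theorem2p6 (a b : R) (N : nat) :
  0 <= a -> 0 < b -> (2 <= N)%nat ->
  exists M0 : nat, forall M : nat, (M0 <= M)%nat ->
  forall ext : R, is_lub (extinction_within a b N M) ext ->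
    (a < 4 ->
       1 - ext <= Rpower (INR M) (- (1/3)) * (1/2 + b * INR N / (1 - a/4))) /\
    (a = 4 ->
       1 - ext <= Rpower (INR M) (- (1/3)) * (1/2 + (b/2) * (INR N + 2) ^ 2)) /\
    (4 < a ->
       1 - ext <= Rpower (INR M) (- (1/3))
                  * (1/2 + b * / ((a/4 - 1) ^ 2) * (a/4) ^ (N + 2))).
Proof.
  intros Ha Hb HN.
  pose proof (ladder_sum_ge0 N _ _ (inner_rate_ge0 a N Ha HN) (phi_source_ge0 b N Hb HN) N) as HK.
  destruct (eventually_div_le_half_inv_cube_root _ HK) as [M0 HM0]. exists M0.
  intros M HM ext Hlub. destruct (HM0 M HM) as [HM1 Hbound].
  pose proof (survival_le_phi a b N M Ha Hb HN HM1 ext Hlub) as Hsurv.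
  assert (Hweaken : forall c, 0 <= c ->
            1 - ext <= Rpower (INR M) (- (1 / 3)) * (1 / 2 + c)).
  { intros c Hc. assert (0 < Rpower (INR M) (- (1 / 3))) by (unfold Rpower; apply exp_pos).
    nra. }
  pose proof (pos_INR N).
  split; [|split]; intros Ha4; apply Hweaken.
  - apply Rdiv_ge0; nra.
  - apply Rmult_le_pos; [lra|apply pow_le; lra].
  - apply Rmult_le_pos; [apply Rmult_le_pos; [lra|]|apply pow_le; lra].
    apply Rlt_le, Rinv_0_lt_compat, pow_lt. lra.
Qed.
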